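(* Let $V=\{n\in\mathbb{Z} : n\geq 2,\ 5\nmid n\}$ and let $\Gamma_5$ be the directed graph with vertex set $V$ whose edges are the up-edges $(n,(n+5)^2)$ for $n\in V$ and the down-edges $(n^2,n)$ for $n\in V$. Then $\Gamma_5$ is connected: for any $x,y\in V$ there is a directed path in $\Gamma_5$ from $x$ to $y$.
   Context: A directed path from $x$ to $y$ is a finite sequence of vertices $x=v_0,v_1,\dots,v_m=y$ such that each $(v_{j-1},v_j)$ is an edge of $\Gamma_5$. *)

From Stdlib Require Import ZArith List.
Open Scope Z_scope.

Definition inV (n : Z) : Prop := 2 <= n /\ ~ (5 | n)%Z.

Definition edge5 (a b : Z) : Prop :=
  (inV a /\ b = (a + 5) ^ 2) \/ (inV b /\ a = b ^ 2).

(* A directed path x = v_0, v_1, ..., v_m = y, given as the list [v_1; ...; v_m]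
   of vertices after the start x. *)
Fixpoint is_path (x : Z) (l : list Z) (y : Z) : Prop :=
  match l with
  | nil => x = y
  | v :: l' => edge5 x v /\ is_path v l' y
  end.

(* Going up and then down moves a vertex n to n + 5, so inside a residue class
   mod 5 every vertex reaches every larger one.  Squares of units mod 5 are
   1 or 4 and fourth powers are 1.  Hence two up-edges take any vertex into the
   class of 1, where j + 5 climbs to j^2 and comes down to j, so everything
   descends to 6.  Conversely 6 climbs to y^2 (through 16 and 4 when
   y^2 = 4 mod 5) and comes down to y. *)

From Stdlib Require Import ZArith List Lia.
Open Scope Z_scope.

Definition reach (x y : Z) : Prop := exists l, is_path x l y.

Lemma is_path_cat l1 l2 x y z :
  is_path x l1 y -> is_path y l2 z -> is_path x (l1 ++ l2) z.
Proof.
  revert x; induction l1 as [|v l1 IH]; simpl; intros x Hxy Hyz.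
  - now subst.
  - destruct Hxy as [Hxv Hvy]. split; [exact Hxv | exact (IH v Hvy Hyz)].
Qed.

Lemma reach_refl x : reach x x.
Proof. now exists nil. Qed.

Lemma reach_trans x y z : reach x y -> reach y z -> reach x z.
Proof. intros [l1 H1] [l2 H2]. exists (l1 ++ l2). exact (is_path_cat _ _ _ _ _ H1 H2). Qed.

Lemma reach_up n : inV n -> reach n ((n + 5) ^ 2).
Proof. intros Hn. exists ((n + 5) ^ 2 :: nil). simpl. split; [left; auto | reflexivity]. Qed.

Lemma reach_down n : inV n -> reach (n ^ 2) n.
Proof. intros Hn. exists (n :: nil). simpl. split; [right; auto | reflexivity]. Qed.

Lemma inV_iff n : inV n <-> 2 <= n /\ n mod 5 <> 0.
Proof.
  unfold inV. rewrite <- (Z.mod_divide n 5) by lia. reflexivity.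
Qed.

Lemma mod5_add_mul5 a k : (a + 5 * k) mod 5 = a mod 5.
Proof. rewrite Z.mul_comm. apply Z_mod_plus_full. Qed.

Lemma mod5_add5 a : (a + 5) mod 5 = a mod 5.
Proof. exact (mod5_add_mul5 a 1). Qed.

Lemma mod5_eq_add_mul5 n m :
  n <= m -> m mod 5 = n mod 5 -> exists k, 0 <= k /\ m = n + 5 * k.
Proof.
  intros Hle Hmod. exists ((m - n) / 5).
  assert (Hdiv : (m - n) mod 5 = 0) by (rewrite Zminus_mod, Hmod, Z.sub_diag; reflexivity).
  pose proof (Z.div_mod (m - n) 5 ltac:(lia)).
  split; [apply Z.div_pos |]; lia.
Qed.

Lemma sq_mod5 z : z mod 5 <> 0 -> z ^ 2 mod 5 = 1 \/ z ^ 2 mod 5 = 4.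
Proof.
  intros Hz. rewrite <- Z.mod_pow_l.
  pose proof (Z.mod_pos_bound z 5 ltac:(lia)).
  assert (Hr : z mod 5 = 1 \/ z mod 5 = 2 \/ z mod 5 = 3 \/ z mod 5 = 4) by lia.
  destruct Hr as [-> | [-> | [-> | ->]]]; auto.
Qed.

Lemma fourth_pow_mod5 z : z mod 5 <> 0 -> (z ^ 2) ^ 2 mod 5 = 1.
Proof.
  intros Hz. rewrite <- Z.mod_pow_l.
  destruct (sq_mod5 z Hz) as [-> | ->]; reflexivity.
Qed.

Lemma inV_add_mul5 n k : inV n -> 0 <= k -> inV (n + 5 * k).
Proof.
  rewrite !inV_iff, mod5_add_mul5. intros [Hn Hmod] Hk. split; [lia | exact Hmod].
Qed.

Lemma reach_add5 n : inV n -> reach n (n + 5).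
Proof.
  intros Hn. apply (reach_trans _ _ _ (reach_up n Hn)), reach_down.
  exact (inV_add_mul5 n 1 Hn ltac:(lia)).
Qed.

Lemma reach_add_mul5 n k : inV n -> 0 <= k -> reach n (n + 5 * k).
Proof.
  intros Hn. revert k; apply natlike_ind.
  - rewrite Z.add_0_r. apply reach_refl.
  - intros k Hk IH. replace (n + 5 * Z.succ k) with (n + 5 * k + 5) by ring.
    exact (reach_trans _ _ _ IH (reach_add5 _ (inV_add_mul5 n k Hn Hk))).
Qed.

Lemma reach_mod5_le n m : inV n -> n <= m -> m mod 5 = n mod 5 -> reach n m.
Proof.
  intros Hn Hle Hmod. destruct (mod5_eq_add_mul5 n m Hle Hmod) as [k [Hk ->]].
  exact (reach_add_mul5 n k Hn Hk).
Qed.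

Lemma reach_six_of_mod1 m : 6 <= m -> m mod 5 = 1 -> reach m 6.
Proof.
  intros Hm Hmod. destruct (mod5_eq_add_mul5 6 m Hm Hmod) as [k [Hk ->]].
  clear Hm Hmod. revert k Hk; apply natlike_ind.
  - rewrite Z.add_0_r. apply reach_refl.
  - intros k Hk IH. set (j := 6 + 5 * k) in IH.
    assert (Hj : inV j).
    { apply inV_add_mul5; [apply inV_iff; split; [lia | discriminate] | exact Hk]. }
    replace (6 + 5 * Z.succ k) with (j + 5) by (unfold j; ring).
    apply (reach_trans _ (j ^ 2)); [| exact (reach_trans _ _ _ (reach_down j Hj) IH)].
    apply reach_mod5_le.
    + exact (inV_add_mul5 j 1 Hj ltac:(lia)).
    + unfold j. nia.
    + replace (j ^ 2) with (1 + 5 * (7 + 12 * k + 5 * k ^ 2)) by (unfold j; ring).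
      replace (j + 5) with (1 + 5 * (2 + k)) by (unfold j; ring).
      rewrite !mod5_add_mul5. reflexivity.
Qed.

Lemma reach_six x : inV x -> reach x 6.
Proof.
  intros Hx. set (y := (x + 5) ^ 2).
  pose proof Hx as [Hx2 Hx5]%inV_iff.
  assert (Hx5' : (x + 5) mod 5 <> 0) by (rewrite mod5_add5; exact Hx5).
  assert (Hy : inV y).
  { apply inV_iff. split; [unfold y; nia |].
    unfold y. destruct (sq_mod5 (x + 5) Hx5') as [-> | ->]; discriminate. }
  apply (reach_trans _ _ _ (reach_up x Hx)).
  apply (reach_trans _ _ _ (reach_up y Hy)).
  apply reach_six_of_mod1; [unfold y; nia |].
  rewrite <- Z.mod_pow_l, mod5_add5, Z.mod_pow_l.
  exact (fourth_pow_mod5 _ Hx5').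
Qed.

Lemma reach_six_four : reach 6 4.
Proof.
  apply (reach_trans _ (4 ^ 2)).
  - apply reach_mod5_le; [apply inV_iff; split; [lia | discriminate] | lia | reflexivity].
  - apply reach_down, inV_iff. split; [lia | discriminate].
Qed.

Lemma reach_six_sq y : inV y -> reach 6 (y ^ 2).
Proof.
  intros Hy. pose proof Hy as [Hy2 Hy5]%inV_iff.
  destruct (sq_mod5 y Hy5) as [Hsq | Hsq].
  - apply reach_mod5_le; [apply inV_iff; split; [lia | discriminate] | | exact Hsq].
    assert (y <> 2) by (intros ->; discriminate). nia.
  - apply (reach_trans _ _ _ reach_six_four).
    apply reach_mod5_le; [apply inV_iff; split; [lia | discriminate] | nia | exact Hsq].
Qed.

Theorem theorem5 :
  forall x y : Z, inV x -> inV y -> exists l : list Z, is_path x l y.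
Proof.
  intros x y Hx Hy.
  apply (reach_trans x 6 y (reach_six x Hx)).
  exact (reach_trans _ _ _ (reach_six_sq y Hy) (reach_down y Hy)).
Qed.
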